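(* Let $F$ be the unique series in $\mathbb{Q}[x,\bar x,y,\bar y][[t]]$ satisfying $(1-St)F=\bar x\bar y-\bar x t[x^0][y^<]F-\bar y t[y^0][x^<]F$. Let $F_1=[x^<][y^<]F$, $F_2=F-F_1$, and, writing $F_2=\sum c_{i,j,n}x^iy^jt^n$, let $F_2^D=\sum_{i\ge0}\sum_n c_{i,i,n}x^iy^it^n$ and $F_2^L=\sum_{i\ge0}\sum_{j\le i-1}\sum_n c_{i,j,n}x^iy^jt^n$. Then $$(1-St)\,F_2^L=t\,[\bar x]F_1+\bigl(tx+t\bar y-\tfrac12\bigr)F_2^D-t\bar x\,[x^0]F_2^L.$$
   Context: Notation: $\bar x=x^{-1}$, $\bar y=y^{-1}$, $S=x+y+\bar x+\bar y$; series in $\mathbb{Q}[x,\bar x,y,\bar y][[t]]$. For $G=\sum c_{i,j,n}x^iy^jt^n$: $[x^0]G=\sum_{j,n}c_{0,j,n}y^jt^n$, $[y^0]G=\sum_{i,n}c_{i,0,n}x^it^n$, $[\bar x]G=\sum_{j,n}c_{-1,j,n}y^jt^n$ (coefficient of $x^{-1}$); $[x^<]G$ (resp. $[y^<]G$) is the sum of terms with negative $x$-exponent (resp. $y$-exponent). *)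

From HB Require Import structures.
From mathcomp Require Import all_boot all_order all_algebra.
Set Implicit Arguments. Unset Strict Implicit. Unset Printing Implicit Defensive.
Import Order.TTheory GRing.Theory Num.Theory.
Local Open Scope ring_scope.

(* A series G in Q[x, xbar, y, ybar][[t]] is represented by its coefficient
   function: G i j n = coefficient of x^i y^j t^n. *)
Definition series := int -> int -> nat -> rat.

(* Membership in Q[x,xbar,y,ybar][[t]]: each t^n coefficient is a Laurent
   polynomial (finitely many nonzero (i,j)). *)
Definition is_series (G : series) : Prop :=
  forall n : nat, exists N : nat, forall i j : int,
    (N < absz i)%N \/ (N < absz j)%N -> G i j n = 0.

Definition sadd (G H : series) : series := fun i j n => G i j n + H i j n.
Definition ssub (G H : series) : series := fun i j n => G i j n - H i j n.
Definition sscale (c : rat) (G : series) : series := fun i j n => c * G i j n.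

Definition smono (a b : int) (c : nat) (G : series) : series :=
  fun i j n => if (c <= n)%N then G (i - a) (j - b) (n - c)%N else 0.

Definition mono (a b : int) (c : nat) : series :=
  fun i j n => if (i == a) && (j == b) && (n == c) then 1 else 0.

(* multiplication by S t, S = x + y + xbar + ybar *)
Definition mulSt (G : series) : series :=
  sadd (sadd (smono 1 0 1 G) (smono 0 1 1 G))
       (sadd (smono (-1) 0 1 G) (smono 0 (-1) 1 G)).

Definition oneMSt (G : series) : series := ssub G (mulSt G).

Definition cx0 (G : series) : series := fun i j n => if i == 0 then G 0 j n else 0.
Definition cy0 (G : series) : series := fun i j n => if j == 0 then G i 0 n else 0.
Definition cxbar (G : series) : series := fun i j n => if i == 0 then G (-1) j n else 0.
Definition xneg (G : series) : series := fun i j n => if i < 0 then G i j n else 0.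
Definition yneg (G : series) : series := fun i j n => if j < 0 then G i j n else 0.

Definition F_equation (F : series) : Prop :=
  oneMSt F = ssub (ssub (mono (-1) (-1) 0) (smono (-1) 0 1 (cx0 (yneg F))))
                  (smono 0 (-1) 1 (cy0 (xneg F))).

Definition F1_of (F : series) : series := xneg (yneg F).
Definition F2_of (F : series) : series := ssub F (F1_of F).
Definition diag_part (G : series) : series :=
  fun i j n => if (0 <= i) && (j == i) then G i j n else 0.
Definition lower_part (G : series) : series :=
  fun i j n => if (0 <= i) && (j <= i - 1) then G i j n else 0.

From mathcomp Require Import all_boot all_order all_algebra.
From mathcomp Require Import zify lra.
From Stdlib Require Import FunctionalExtensionality.
Set Implicit Arguments.
Set Bullet Behavior "Strict Subproofs".
Import Order.TTheory GRing.Theory Num.Theory.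
Local Open Scope ring_scope.

(* All series are compared coefficient by coefficient.
   1. Taking the coefficient of x^i y^j t^n in the defining equation gives
      F at t^0 (only x^-1 y^-1) and a recurrence expressing the t^(n+1)
      coefficient through the four neighbours at t^n, corrected by the
      boundary terms [x^0][y^<]F and [y^0][x^<]F.
   2. The recurrence and the initial value are invariant under i <-> j, so
      F is symmetric in x and y.  In the half-plane i >= 0 the corrections
      vanish, and on the diagonal symmetry pairs the four neighbours, so
      that F(i,i,n+1) = 2 (F(i+1,i,n) + F(i,i-1,n)).
   3. The theorem is checked coefficientwise: F1, F2^D, F2^L are F restricted
      to regions of the (i,j)-plane, and splitting the plane into those
      regions, each coefficient identity is an instance of the plain
      recurrence (below the diagonal), of the diagonal identity (on it), or
      is trivial (elsewhere). *)

Lemma oneMSt0 (G : series) (i j : int) : oneMSt G i j 0 = G i j 0.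
Proof. by rewrite /oneMSt /mulSt /ssub /sadd /smono /= !(addr0, oppr0). Qed.

Lemma oneMStS (G : series) (i j : int) (n : nat) :
  oneMSt G i j n.+1 =
  G i j n.+1 - (G (i - 1) j n + G i (j - 1) n + G (i + 1) j n + G i (j + 1) n).
Proof.
by rewrite /oneMSt /mulSt /ssub /sadd /smono /= subn1 !subr0 !opprK addrA.
Qed.

Lemma F1_coef (G : series) (i j : int) (n : nat) :
  F1_of G i j n = if (i < 0) && (j < 0) then G i j n else 0.
Proof. by rewrite /F1_of /xneg /yneg; case: (i < 0); case: (j < 0). Qed.

Lemma F2D_coef (G : series) (i j : int) (n : nat) :
  diag_part (F2_of G) i j n = if (0 <= i) && (j == i) then G i j n else 0.
Proof.
rewrite /diag_part /F2_of /F1_of /ssub /xneg /yneg.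
by case: ifP => // /andP[i_ge0 _]; rewrite ltNge i_ge0 subr0.
Qed.

Lemma F2L_coef (G : series) (i j : int) (n : nat) :
  lower_part (F2_of G) i j n = if (0 <= i) && (j <= i - 1) then G i j n else 0.
Proof.
rewrite /lower_part /F2_of /F1_of /ssub /xneg /yneg.
by case: ifP => // /andP[i_ge0 _]; rewrite ltNge i_ge0 subr0.
Qed.

Ltac decide_ifs :=
  repeat match goal with |- context [if ?c then _ else _] =>
    first [ have -> : c = true by lia
          | have -> : c = false by lia
          | let E := fresh "E" in case E : c ] end.

Section CoefficientsOfF.

Variable F : series.
Hypothesis F_eq : F_equation F.

Lemma F_init (i j : int) : F i j 0 = if (i == -1) && (j == -1) then 1 else 0.
Proof.
have := congr1 (fun G => G i j 0%N) F_eq.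
rewrite /= oneMSt0 => ->.
by rewrite /ssub /smono /mono /= andbT !subr0.
Qed.

Lemma F_rec (i j : int) (n : nat) :
  F i j n.+1 = F (i - 1) j n + F i (j - 1) n + F (i + 1) j n + F i (j + 1) n
    - (if (i == -1) && (j < 0) then F 0 j n else 0)
    - (if (j == -1) && (i < 0) then F i 0 n else 0).
Proof.
have := congr1 (fun G => G i j n.+1) F_eq.
rewrite /= oneMStS /ssub /smono /mono /cx0 /cy0 /xneg /yneg /= andbF subn1 /=.
rewrite !opprK !subr0 !addr_eq0 /=.
by case: (i == -1); case: (j == -1) => /=; lra.
Qed.

(* Recurrence and initial value are invariant under exchanging x and y,
   hence so is F. *)
Lemma F_sym (n : nat) (i j : int) : F i j n = F j i n.
Proof.
elim: n i j => [|n IH] i j; first by rewrite !F_init andbC.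
rewrite !F_rec (IH (i - 1)) (IH i (j - 1)) (IH (i + 1)) (IH i (j + 1)).
rewrite (IH 0) (IH i 0); lra.
Qed.

Lemma F_rec_nonneg (i j : int) (n : nat) : 0 <= i ->
  F i j n.+1 = F (i - 1) j n + F i (j - 1) n + F (i + 1) j n + F i (j + 1) n.
Proof.
move=> i_ge0; rewrite F_rec.
have [-> ->] : (i == -1) = false /\ (i < 0) = false by split; lia.
by rewrite andbF !subr0.
Qed.

(* On the diagonal, symmetry identifies the neighbours pairwise. *)
Lemma F_diag (i : int) (n : nat) : 0 <= i ->
  F i i n.+1 = 2 * (F (i + 1) i n + F i (i - 1) n).
Proof.
move=> i_ge0; rewrite F_rec_nonneg // (F_sym n (i - 1)) (F_sym n i (i + 1)).
lra.
Qed.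

Let F1 := F1_of F.
Let F2D := diag_part (F2_of F).
Let F2L := lower_part (F2_of F).

(* The theorem at order t^0: both sides vanish, since the only monomial of
   F at t^0 lies outside the regions of F2^D and F2^L. *)
Lemma coef_t0 (i j : int) : F2L i j 0 = - (1 / 2 * F2D i j 0).
Proof.
rewrite /F2L /F2D F2L_coef F2D_coef !F_init.
by decide_ifs; rewrite mulr0 oppr0.
Qed.

(* The theorem at order t^(n+1), checked region by region of the
   (i,j)-plane: below the diagonal it is the recurrence of F (for i = 0 the
   left neighbour F(-1,j) is supplied by [xbar]F1), on the diagonal it is
   F_diag, at i = -1 both sides are -F2^L(0,j), and elsewhere every term
   vanishes. *)
Lemma coef_succ (i j : int) (n : nat) :
  F2L i j n.+1 - (F2L (i - 1) j n + F2L i (j - 1) n + F2L (i + 1) j n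
                  + F2L i (j + 1) n)
  = (if i == 0 then F1 (-1) j n else 0)
    + (F2D (i - 1) j n + F2D i (j + 1) n - 1 / 2 * F2D i j n.+1)
    - (if i == -1 then F2L 0 j n else 0).
Proof.
rewrite /F2L /F2D /F1 !F2L_coef !F2D_coef F1_coef.
have : i < -1 \/ i = -1 \/ 0 <= i < j \/ j = i /\ 0 <= i
       \/ i = 0 /\ j < 0 \/ 0 < i /\ j < i by lia.
case=> [i_lt | [-> | [/andP[i_ge0 ij] | [[-> i_ge0] | [[-> j_lt0] | [i_gt0 ji]]]]]].
- by decide_ifs; rewrite ?mulr0; lra.
- by rewrite ?addNr ?sub0r; decide_ifs; rewrite ?mulr0; lra.
- by decide_ifs; rewrite ?mulr0; lra.
- by decide_ifs; rewrite F_diag //; lra.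
- rewrite ?sub0r ?add0r; decide_ifs; rewrite F_rec_nonneg // sub0r add0r.
  all: lra.
- by decide_ifs; rewrite F_rec_nonneg //; lra.
Qed.

End CoefficientsOfF.

Theorem mainTheorem10 (F : series) :
  is_series F -> F_equation F ->
  let F1 := F1_of F in
  let F2 := F2_of F in
  let F2D := diag_part F2 in
  let F2L := lower_part F2 in
  oneMSt F2L =
    ssub (sadd (smono 0 0 1 (cxbar F1))
               (ssub (sadd (smono 1 0 1 F2D) (smono 0 (-1) 1 F2D))
                     (sscale (1 / 2) F2D)))
         (smono (-1) 0 1 (cx0 F2L)).
Proof.
move=> _ F_eq F1 F2 F2D F2L; rewrite {}/F2L {}/F2D {}/F2 {}/F1.
apply: functional_extensionality => i; apply: functional_extensionality => j.
apply: functional_extensionality => -[|n].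
- rewrite oneMSt0 /ssub /sadd /smono /sscale /= coef_t0 //; lra.
- rewrite oneMStS coef_succ // /ssub /sadd /smono /sscale /cxbar /cx0 /=.
  by rewrite subn1 !subr0 opprK addr_eq0.
Qed.
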